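(* There exists $P\in\mathbb R^{L(m+r)\times(Lm+n)}$ with $\mathrm{im}P=\mathscr P$ and $P^\top P=I$. Further, for such $P$, the IOH $v$ satisfies $\hat v(t+1)=P^\top\Theta P\hat v(t)+P^\top\Pi u(t)$, $v(t)=P\hat v(t)$ for $t\ge L$, where $\hat v(L)=P^\top v(L)$. Besides, if $v(L)\sim\mathcal N_\Phi$ where $\Phi\ge0$ satisfies $\mathrm{im}\Phi=\mathscr P$, then $\hat v(L)\sim\mathcal N_{\hat\Phi}$ with $\hat\Phi:=P^\top\Phi P>0$.
   Context: System $\Sigma_s$: $x(t+1)=Ax(t)+Bu(t)$, $y(t)=Cx(t)$, $t\ge0$, $x\in\mathbb R^n,u\in\mathbb R^m,y\in\mathbb R^r$; standing assumptions: $(A,B,C)$ minimal, $A$ Schur. $\mathcal R_L=[A^{L-1}B,\dots,B]$, $\mathcal O_L=[C^\top,\dots,(CA^{L-1})^\top]^\top$, $\mathcal H_L$ the $Lr\times Lm$ block lower-triangular Toeplitz matrix with $(i,j)$ block $H_{i-j}$, $H_0=0$, $H_k=CA^{k-1}B$. Fix $L$ with $\operatorname{rank}\mathcal O_L=n$. IOH: $v(t)=[u(t-L)^\top,\dots,u(t-1)^\top,y(t-L)^\top,\dots,y(t-1)^\top]^\top$, $t\ge L$. $\Gamma=[\mathcal R_L-A^L\mathcal O_L^\dagger\mathcal H_L,\ A^L\mathcal O_L^\dagger]$; $\Theta=\mathrm{diag}(S_m,S_r)+EC\Gamma$, with $S_k$ the $Lk\times Lk$ block matrix having $I_k$ in blocks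 $(i,i+1)$, $i<L$, zeros elsewhere, $E$ having $I_r$ in its last $r$ rows, zeros elsewhere; $\Pi$ has $I_m$ in rows $(L-1)m+1,\dots,Lm$, zeros elsewhere. The IOH obeys $v(t+1)=\Theta v(t)+\Pi u(t)$, $y=C\Gamma v$, $t\ge L$. $\mathscr P=\mathrm{im}[\Theta^{L(m+r)-1}\Pi,\dots,\Theta\Pi,\Pi]$. $\mathcal N_\Phi$ denotes a Gaussian distribution whose second moment about zero is $\Phi$. *)

From HB Require Import structures.
From mathcomp Require Import all_boot all_order all_algebra.
From mathcomp Require Import all_classical all_reals all_analysis.
From mathcomp Require Import complex.

Set Implicit Arguments.
Unset Strict Implicit.
Unset Printing Implicit Defensive.

Import Order.TTheory GRing.Theory Num.Theory.
Local Open Scope ring_scope.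
Local Open Scope classical_set_scope.

(* Block-matrix helpers.  An index k : 'I_(p * a) is split as the pair *)
(* (block, offset) : 'I_p * 'I_a, with k = block * a + offset (the same *)
(* row-major convention as mathcomp's mxvec_index).                   *)
Definition bidx {p a : nat} (k : 'I_(p * a)) : 'I_p * 'I_a :=
  enum_val (cast_ord (esym (mxvec_cast p a)) k).

Definition blockmx {R : Type} {p q a b : nat}
  (f : 'I_p -> 'I_q -> 'M[R]_(a, b)) : 'M[R]_(p * a, q * b) :=
  \matrix_(i, j) f (bidx i).1 (bidx j).1 (bidx i).2 (bidx j).2.

Definition bcol {R : Type} {p a b : nat}
  (f : 'I_p -> 'M[R]_(a, b)) : 'M[R]_(p * a, b) :=
  \matrix_(i, j) f (bidx i).1 (bidx i).2 j.

Definition brow {R : Type} {q a b : nat}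
  (f : 'I_q -> 'M[R]_(a, b)) : 'M[R]_(a, q * b) :=
  \matrix_(i, j) f (bidx j).1 i (bidx j).2.

Definition same_image {R : fieldType} {p a b : nat}
  (A : 'M[R]_(p, a)) (B : 'M[R]_(p, b)) : bool := (A^T == B^T)%MS.

Definition is_mp_pinv {R : fieldType} {p q : nat}
  (M : 'M[R]_(p, q)) (X : 'M[R]_(q, p)) : Prop :=
  [/\ M *m X *m M = M, X *m M *m X = X,
      (M *m X)^T = M *m X & (X *m M)^T = X *m M].

Definition psd {R : realFieldType} {N : nat} (M : 'M[R]_N) : Prop :=
  M^T = M /\ forall x : 'cV[R]_N, 0 <= (x^T *m M *m x) 0 0.
Definition posdef {R : realFieldType} {N : nat} (M : 'M[R]_N) : Prop :=
  M^T = M /\ forall x : 'cV[R]_N, x != 0 -> 0 < (x^T *m M *m x) 0 0.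

Definition schur {R : rcfType} {n : nat} (A : 'M[R]_n) : Prop :=
  forall l : R[i], eigenvalue (map_mx (real_complex R) A) l -> `|l| < 1.

Section SystemMatrices.
Variables (R : fieldType) (n m r : nat).
Variables (A : 'M[R]_n) (B : 'M[R]_(n, m)) (C : 'M[R]_(r, n)).

Definition ctrb (L : nat) : 'M[R]_(n, L * m) :=
  brow (fun j : 'I_L => A ^+ (L - 1 - j) *m B).

Definition obsv (L : nat) : 'M[R]_(L * r, n) :=
  bcol (fun i : 'I_L => C *m A ^+ i).

Definition toeplitz (L : nat) : 'M[R]_(L * r, L * m) :=
  blockmx (fun i j : 'I_L =>
    if (j < i)%N then C *m A ^+ (i - j - 1) *m B else 0).

Variables (L : nat) (Od : 'M[R]_(n, L * r)).

Definition Gamma : 'M[R]_(n, L * m + L * r) :=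
  row_mx (ctrb L - A ^+ L *m Od *m toeplitz L) (A ^+ L *m Od).

Definition shiftmx (k : nat) : 'M[R]_(L * k) :=
  blockmx (fun i j : 'I_L => if (j == i.+1 :> nat) then 1%:M else 0).

Definition lastblk (k : nat) : 'M[R]_(L * k, k) :=
  bcol (fun i : 'I_L => if (i == L.-1 :> nat) then 1%:M else 0).

Definition Emx : 'M[R]_(L * m + L * r, r) := col_mx 0 (lastblk r).
Definition Pimx : 'M[R]_(L * m + L * r, m) := col_mx (lastblk m) 0.

Definition Theta : 'M[R]_(L * m + L * r) :=
  block_mx (shiftmx m) 0 0 (shiftmx r) + Emx *m C *m Gamma.

(* generator of the subspace scrP: [Theta^(N-1) Pi, ..., Theta Pi, Pi], N = L(m+r) *)
Definition PPgen : 'M[R]_(L * m + L * r, (L * m + L * r) * m) :=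
  brow (fun k : 'I_(L * m + L * r) =>
    Theta ^+ (L * m + L * r - 1 - k) *m Pimx).

Fixpoint state (x0 : 'cV[R]_n) (u : nat -> 'cV[R]_m) (t : nat) : 'cV[R]_n :=
  match t with
  | 0 => x0
  | t'.+1 => A *m state x0 u t' + B *m u t'
  end.

Definition output x0 u t : 'cV[R]_r := C *m state x0 u t.

(* IOH v(t) = [u(t-L); ...; u(t-1); y(t-L); ...; y(t-1)]  (meaningful for t >= L) *)
Definition ioh (x0 : 'cV[R]_n) (u : nat -> 'cV[R]_m) (t : nat)
  : 'cV[R]_(L * m + L * r) :=
  col_mx (bcol (fun k : 'I_L => u (t - L + k)%N))
         (bcol (fun k : 'I_L => output x0 u (t - L + k)%N)).

End SystemMatrices.

Definition gaussian_rv {d} {T : measurableType d} {R : realType}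
  (P : probability T R) (f : T -> R) (mn s2 : R) : Prop :=
  measurable_fun setT f /\
  forall B : set R, measurable B ->
    P (f @^-1` B) = (if s2 == 0 then \d_mn B else normal_prob mn (Num.sqrt s2) B).

Definition gaussian_vec {d} {T : measurableType d} {R : realType} {N : nat}
  (P : probability T R) (X : T -> 'cV[R]_N) : Prop :=
  forall a : 'cV[R]_N, exists mn s2 : R,
    0 <= s2 /\ gaussian_rv P (fun w => (a^T *m X w) 0 0) mn s2.

(* X ~ N_Phi : X is Gaussian and its second moment about zero E[X X^T] is Phi *)
Definition normal_mom2 {d} {T : measurableType d} {R : realType} {N : nat}
  (P : probability T R) (X : T -> 'cV[R]_N) (Phi : 'M[R]_N) : Prop :=
  gaussian_vec P X /\
  forall i j : 'I_N, ('E_P[fun w => (X w i ord0 * X w j ord0)%R] = (Phi i j)%:E)%E.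

From HB Require Import structures.
From mathcomp Require Import all_boot all_order all_algebra.
From mathcomp Require Import all_classical all_reals all_analysis.
From mathcomp Require Import complex measurable_realfun.
From mathcomp Require Import zify lra.
Import Order.TTheory GRing.Theory Num.Theory.
Local Open Scope ring_scope.
Set Implicit Arguments.
Unset Strict Implicit.
Unset Printing Implicit Defensive.

(* For t >= L the IOH is v(t) = W [u(t-L); ...; u(t-1); x(t-L)] with
   W = [[I, 0], [H_L, O_L]], which has full column rank Lm + n because
   O_L^dagger O_L = I.  The image of W is Theta-invariant and contains im Pi,
   so it contains the Krylov space scrP.  Conversely scrP is Theta-invariant by
   Cayley-Hamilton and contains im Pi, so it contains every IOH reachable from
   rest; by controllability these exhaust im W.  Hence scrP = im W, and
   Gram-Schmidt on the columns of W gives P.  As v(t) stays in im P, where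
   P P^T is the identity, P^T v follows the compressed recursion.  Finally
   P^T v(L) has second moment P^T Phi P, which is definite because
   im P = im Phi and, Phi being semidefinite, z^T Phi z = 0 forces Phi z = 0. *)

Section BlockMatrices.
Variable R : pzRingType.

Lemma exprSmx n (M : 'M[R]_n) i : M ^+ i.+1 = M *m M ^+ i.
Proof. exact: exprS. Qed.

Lemma bidx_mxvec_index p a (i : 'I_p) (j : 'I_a) : bidx (mxvec_index i j) = (i, j).
Proof. by rewrite /bidx cast_ordK enum_rankK. Qed.

Lemma sum_mxvec_index (V : nmodType) p a (F : 'I_(p * a) -> V) :
  \sum_k F k = \sum_i \sum_j F (mxvec_index i j).
Proof.
rewrite pair_big /= (reindex (uncurry (@mxvec_index p a))) /=.
  by apply: eq_bigr => -[].
by exists (fun k => bidx k) => [[i j] _ | k _]; [rewrite bidx_mxvec_index |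
  case/mxvec_indexP: k => i j; rewrite bidx_mxvec_index].
Qed.

Lemma bcolE p a b (f : 'I_p -> 'M[R]_(a, b)) i k j :
  bcol f (mxvec_index i k) j = f i k j.
Proof. by rewrite mxE bidx_mxvec_index. Qed.

Lemma mul_brow_bcol q a b c (f : 'I_q -> 'M[R]_(a, b)) (g : 'I_q -> 'M[R]_(b, c)) :
  brow f *m bcol g = \sum_j f j *m g j.
Proof.
apply/matrixP => i l; rewrite !mxE sum_mxvec_index summxE; apply: eq_bigr => j _.
by rewrite !mxE; apply: eq_bigr => k _; rewrite mxE bidx_mxvec_index bcolE.
Qed.

Lemma mul_blockmx_bcol p q a b c (f : 'I_p -> 'I_q -> 'M[R]_(a, b))
    (g : 'I_q -> 'M[R]_(b, c)) :
  blockmx f *m bcol g = bcol (fun i => \sum_j f i j *m g j).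
Proof.
apply/matrixP => i l; rewrite !mxE sum_mxvec_index summxE; apply: eq_bigr => j _.
by rewrite !mxE; apply: eq_bigr => k _; rewrite mxE bidx_mxvec_index bcolE.
Qed.

Lemma mul_bcol_mx p a b c (f : 'I_p -> 'M[R]_(a, b)) (M : 'M[R]_(b, c)) :
  bcol f *m M = bcol (fun i => f i *m M).
Proof. by apply/matrixP => i l; rewrite !mxE; apply: eq_bigr => k _; rewrite !mxE. Qed.

Lemma mul_mx_brow q a b c (f : 'I_q -> 'M[R]_(b, c)) (M : 'M[R]_(a, b)) :
  M *m brow f = brow (fun j => M *m f j).
Proof. by apply/matrixP => i l; rewrite !mxE; apply: eq_bigr => k _; rewrite !mxE. Qed.

Lemma add_bcol p a c (f g : 'I_p -> 'M[R]_(a, c)) :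
  bcol f + bcol g = bcol (fun i => f i + g i).
Proof. by apply/matrixP => i l; rewrite !mxE. Qed.

Lemma bcol0 p a c : bcol (fun=> 0) = 0 :> 'M[R]_(p * a, c).
Proof. by apply/matrixP => i l; rewrite !mxE. Qed.

Definition bblock p a c (D : 'M[R]_(p * a, c)) (k : nat) : 'M[R]_(a, c) :=
  if insub k is Some i then \matrix_(j, l) D (mxvec_index i j) l else 0.

Lemma bcol_bblock p a c (D : 'M[R]_(p * a, c)) : bcol (fun i : 'I_p => bblock D i) = D.
Proof.
apply/matrixP => k l; case/mxvec_indexP: k => i j.
by rewrite bcolE /bblock valK mxE.
Qed.

Lemma bblock_out p a c (D : 'M[R]_(p * a, c)) k : (p <= k)%N -> bblock D k = 0.
Proof. by move=> pk; rewrite /bblock insubF // ltnNge pk. Qed.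

End BlockMatrices.

Definition csubmx (R : fieldType) p a b (X : 'M[R]_(p, a)) (Y : 'M[R]_(p, b)) :=
  (X^T <= Y^T)%MS.

Section ColumnSpaceInclusion.
Variable R : fieldType.
Implicit Types p q a b c : nat.

Lemma csubmx_trans p a b c (X : 'M[R]_(p, a)) (Y : 'M[R]_(p, b)) (Z : 'M[R]_(p, c)) :
  csubmx X Y -> csubmx Y Z -> csubmx X Z.
Proof. exact: submx_trans. Qed.

Lemma csubmxMr p a b (X : 'M[R]_(p, a)) (D : 'M[R]_(a, b)) : csubmx (X *m D) X.
Proof. by rewrite /csubmx trmx_mul submxMl. Qed.

Lemma mulmx_csub p a b c (X : 'M[R]_(p, a)) (Y : 'M[R]_(p, c)) (D : 'M[R]_(a, b)) :
  csubmx X Y -> csubmx (X *m D) Y.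
Proof. exact/csubmx_trans/csubmxMr. Qed.

Lemma csubmxMl p q a b (M : 'M[R]_(q, p)) (X : 'M[R]_(p, a)) (Y : 'M[R]_(p, b)) :
  csubmx X Y -> csubmx (M *m X) (M *m Y).
Proof. by rewrite /csubmx !trmx_mul; apply: submxMr. Qed.

Lemma addmx_csub p a b (X X' : 'M[R]_(p, a)) (Y : 'M[R]_(p, b)) :
  csubmx X Y -> csubmx X' Y -> csubmx (X + X') Y.
Proof. by rewrite /csubmx linearD /=; apply: addmx_sub. Qed.

Lemma oppmx_csub p a b (X : 'M[R]_(p, a)) (Y : 'M[R]_(p, b)) :
  csubmx X Y -> csubmx (- X) Y.
Proof. by rewrite /csubmx linearN /= eqmx_opp. Qed.

Lemma summx_csub p a b (I : finType) (F : I -> 'M[R]_(p, a)) (Y : 'M[R]_(p, b)) :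
  (forall i, csubmx (F i) Y) -> csubmx (\sum_i F i) Y.
Proof. by move=> FY; rewrite /csubmx raddf_sum; apply: summx_sub => i _; apply: FY. Qed.

Lemma csubmxP p a b (X : 'M[R]_(p, a)) (Y : 'M[R]_(p, b)) :
  csubmx X Y -> exists D : 'M[R]_(b, a), X = Y *m D.
Proof. by case/submxP => D XD; exists D^T; rewrite -[X]trmxK XD trmx_mul trmxK. Qed.

Lemma col_csubP p a b (X : 'M[R]_(p, a)) (Y : 'M[R]_(p, b)) :
  (forall v : 'cV[R]_a, csubmx (X *m v) Y) -> csubmx X Y.
Proof. by move=> XY; apply/row_subP => i; rewrite -tr_col colE; apply: XY. Qed.

Lemma brow_csub p q a b (f : 'I_q -> 'M[R]_(p, a)) (Y : 'M[R]_(p, b)) :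
  (forall j, csubmx (f j) Y) -> csubmx (brow f) Y.
Proof.
move=> fY; apply: col_csubP => v; rewrite -(bcol_bblock v) mul_brow_bcol.
by apply: summx_csub => j; apply: mulmx_csub.
Qed.

Lemma csub_brow p q a (f : 'I_q -> 'M[R]_(p, a)) j : csubmx (f j) (brow f).
Proof.
have -> : f j = brow f *m bcol (fun k => if k == j then 1%:M else 0 : 'M[R]_a).
  rewrite mul_brow_bcol (bigD1 j) //= eqxx mulmx1 big1 ?addr0 //.
  by move=> k /negbTE ->; rewrite mulmx0.
exact: csubmxMr.
Qed.

Lemma csubmx_projK p a b (P : 'M[R]_(p, a)) (Z : 'M[R]_(p, b)) :
  P^T *m P = 1%:M -> csubmx Z P -> P *m (P^T *m Z) = Z.
Proof. by move=> PtP /csubmxP [D ->]; rewrite (mulmxA P^T) PtP mul1mx. Qed.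

End ColumnSpaceInclusion.

Lemma horner_mx_sum (R : fieldType) k (M : 'M[R]_k.+1) (p : {poly R}) :
  horner_mx M p = \sum_(i < size p) p`_i *: M ^+ i.
Proof.
rewrite -{1}(coefK p) poly_def rmorph_sum; apply: eq_bigr => i _.
change (horner_mx M (p`_i *: 'X^i) = p`_i *: M ^+ i).
by rewrite horner_mxZ rmorphXn /= horner_mx_X.
Qed.

Lemma Cayley_Hamilton_lincomb (R : fieldType) k (M : 'M[R]_k) :
  exists c : 'I_k -> R, M ^+ k = \sum_i c i *: M ^+ i.
Proof.
case: k M => [|k] M; first by exists (fun=> 0); apply/matrixP => -[].
exists (fun i => - (char_poly M)`_i).
have := Cayley_Hamilton M; rewrite horner_mx_sum size_char_poly big_ord_recr /=.
have /monicP := char_poly_monic M; rewrite lead_coefE size_char_poly => -> /eqP.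
rewrite scale1r addrC addr_eq0 => /eqP ->.
by rewrite -sumrN; apply: eq_bigr => i _; rewrite scaleNr.
Qed.

Section Krylov.
Variables (R : fieldType) (N k : nat) (M : 'M[R]_N) (G : 'M[R]_(N, k)).

Local Notation K := (brow (fun j : 'I_N => M ^+ (N - 1 - j) *m G)).

Lemma krylov_exp_lt i : (i < N)%N -> csubmx (M ^+ i *m G) K.
Proof.
move=> iN; have jN : (N - 1 - i < N)%N by lia.
have := csub_brow (fun j : 'I_N => M ^+ (N - 1 - j) *m G) (Ordinal jN).
by rewrite /= (_ : N - 1 - (N - 1 - i) = i)%N //; lia.
Qed.

Lemma krylov_exp i : (i <= N)%N -> csubmx (M ^+ i *m G) K.
Proof.
rewrite leq_eqVlt => /predU1P [-> | /krylov_exp_lt //].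
have [c ->] := Cayley_Hamilton_lincomb M; rewrite mulmx_suml; apply: summx_csub => j.
by rewrite -scalemxAl /csubmx linearZ /=; apply/scalemx_sub/krylov_exp_lt.
Qed.

Lemma krylov_invariant : csubmx (M *m K) K.
Proof.
rewrite mul_mx_brow; apply: brow_csub => j.
by rewrite mulmxA -exprSmx; apply: krylov_exp; have := ltn_ord j; lia.
Qed.

Lemma krylov_base : csubmx G K.
Proof. by have := krylov_exp (leq0n N); rewrite expr0 mul1mx. Qed.

Lemma krylov_min c (V : 'M[R]_(N, c)) :
  csubmx (M *m V) V -> csubmx G V -> csubmx K V.
Proof.
move=> MV GV; apply: brow_csub => j; elim: (N - 1 - j)%N => [|i IH].
  by rewrite expr0 mul1mx.
by rewrite exprSmx -mulmxA; apply/(csubmx_trans _ MV)/csubmxMl.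
Qed.

End Krylov.

Lemma mp_pinv_mulVmx (R : fieldType) p q (M : 'M[R]_(p, q)) (X : 'M[R]_(q, p)) :
  \rank M = q -> is_mp_pinv M X -> X *m M = 1%:M.
Proof.
move=> rkM [MXM _ _ _].
have /row_freeP [D DM] : row_free M^T by rewrite /row_free mxrank_tr rkM.
have {}DM : D^T *m M = 1%:M by rewrite -[M]trmxK -trmx_mul DM trmx1.
by rewrite -[X *m M]mul1mx -DM -!mulmxA (mulmxA M) MXM.
Qed.

Section System.
Variables (R : fieldType) (n m r : nat).
Variables (A : 'M[R]_n) (B : 'M[R]_(n, m)) (C : 'M[R]_(r, n)).
Implicit Type u : nat -> 'cV[R]_m.

Lemma state_add (x0 : 'cV[R]_n) u s i : state A B x0 u (s + i) =
  A ^+ i *m state A B x0 u s + \sum_(j < i) A ^+ (i - 1 - j) *m B *m u (s + j)%N.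
Proof.
elim: i => [|i IH]; first by rewrite addn0 expr0 mul1mx big_ord0 addr0.
rewrite addnS /= IH big_ord_recr /= mulmxDr mulmxA -exprSmx addrA subSS subn0.
rewrite subnn expr0 mul1mx mulmx_sumr; congr (_ + _ + _); apply: eq_bigr => j _.
by rewrite !mulmxA -exprSmx; congr (_ ^+ _ *m _ *m _); have := ltn_ord j; lia.
Qed.

Lemma state_add_ctrb x0 u s L : state A B x0 u (s + L) =
  A ^+ L *m state A B x0 u s + ctrb A B L *m bcol (fun k : 'I_L => u (s + k)%N).
Proof. by rewrite state_add /ctrb mul_brow_bcol. Qed.

Variable L : nat.

Definition iohmx : 'M[R]_(L * m + L * r, L * m + n) :=
  block_mx 1%:M 0 (toeplitz A B C L) (obsv A C L).

Lemma iohE x0 u t : (L <= t)%N -> ioh A B C L x0 u t =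
  iohmx *m col_mx (bcol (fun k : 'I_L => u (t - L + k)%N)) (state A B x0 u (t - L)).
Proof.
move=> Lt; rewrite /ioh /iohmx mul_block_col mul1mx mul0mx addr0; congr col_mx.
rewrite addrC /obsv mul_bcol_mx /toeplitz mul_blockmx_bcol add_bcol; congr bcol.
apply/funext => i; rewrite /output state_add mulmxDr !mulmxA.
congr (_ + _); rewrite mulmx_sumr (big_ord_widen L (fun j : nat =>
  C *m (A ^+ (i - 1 - j) *m B *m u (t - L + j)%N)) (ltnW (ltn_ord i))).
rewrite big_mkcond /=; apply: eq_bigr => j _.
by case: ifP => _; rewrite ?mul0mx // !mulmxA subnAC.
Qed.

Variable Od : 'M[R]_(n, L * r).
Hypothesis Od_obsv : Od *m obsv A C L = 1%:M.

Lemma Gamma_ioh x0 u t : (L <= t)%N ->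
  Gamma A B C Od *m ioh A B C L x0 u t = state A B x0 u t.
Proof.
move=> Lt; rewrite iohE // /iohmx mulmxA /Gamma mul_row_block.
rewrite mulmx1 mulmx0 add0r subrK -!mulmxA Od_obsv mulmx1 mul_row_col.
by rewrite addrC -state_add_ctrb subnK.
Qed.

Lemma shift_lastblk k c (F : nat -> 'M[R]_(k, c)) :
  shiftmx R L k *m bcol (fun j : 'I_L => F j) + lastblk R L k *m F L =
  bcol (fun i : 'I_L => F i.+1).
Proof.
rewrite /shiftmx mul_blockmx_bcol /lastblk mul_bcol_mx add_bcol; congr bcol.
apply/funext => i; have [iL | iL] := ltnP i.+1 L.
  rewrite (bigD1 (Ordinal iL)) //= eqxx mul1mx big1 => [|j ji]; last first.
    by rewrite ifN ?mul0mx //; apply: contra ji => /eqP/val_inj ->.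
  by rewrite ifF ?mul0mx ?addr0 //; apply/eqP; lia.
have iL1 : i.+1 = L by have := ltn_ord i; lia.
rewrite big1 => [|j _]; last by rewrite ifF ?mul0mx //; apply/eqP; have := ltn_ord j; lia.
by rewrite ifT ?mul1mx ?add0r ?iL1 //; apply/eqP; lia.
Qed.

Lemma ioh_step x0 u t : (L <= t)%N ->
  ioh A B C L x0 u t.+1 = Theta A B C Od *m ioh A B C L x0 u t + Pimx R m r L *m u t.
Proof.
move=> Lt; rewrite /Theta mulmxDl -!mulmxA Gamma_ioh // {2}/ioh mul_block_col.
rewrite /Emx /Pimx !mul_col_mx !mul0mx !addr0 !add0r !add_col_mx !addr0 /ioh.
have shift k (F : nat -> 'cV[R]_k) :
    bcol (fun i : 'I_L => F (t - L + i.+1)%N) = bcol (fun i : 'I_L => F (t.+1 - L + i)%N).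
  by congr bcol; apply/funext => i; congr F; lia.
congr col_mx; rewrite -shift.
  by rewrite -(shift_lastblk (fun j => u (t - L + j)%N)) subnK.
by rewrite -(shift_lastblk (fun j => output A B C x0 u (t - L + j))) subnK.
Qed.

End System.

Section IohImage.
Variables (R : fieldType) (n m r L : nat).
Variables (A : 'M[R]_n) (B : 'M[R]_(n, m)) (C : 'M[R]_(r, n)) (Od : 'M[R]_(n, L * r)).
Hypothesis Od_obsv : Od *m obsv A C L = 1%:M.

Local Notation W := (iohmx A B C L).
Local Notation Th := (Theta A B C Od).
Local Notation Pi := (Pimx R m r L).
Local Notation PP := (PPgen A B C Od).
Local Notation v := (ioh A B C L).

Lemma ioh_csub_iohmx x0 u t : (L <= t)%N -> csubmx (v x0 u t) W.
Proof. by move=> Lt; rewrite iohE //; apply: csubmxMr. Qed.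

Lemma iohmx_Theta_invariant : csubmx (Th *m W) W.
Proof.
apply: col_csubP => z; rewrite -(vsubmxK z) -mulmxA.
set U := usubmx z; set x := dsubmx z; pose u k := bblock U k.
have -> : W *m col_mx U x = v x u L.
  by rewrite iohE // subnn /u bcol_bblock.
have := ioh_step B Od_obsv x u (leqnn L); rewrite /u bblock_out // mulmx0 addr0 => <-.
exact: ioh_csub_iohmx.
Qed.

Lemma Pimx_csub_iohmx : csubmx Pi W.
Proof.
apply: col_csubP => w; pose u k := if k == L then w else 0.
have := ioh_step B Od_obsv 0 u (leqnn L); rewrite /u eqxx => vL1.
have -> : Pi *m w = v 0 u L.+1 - Th *m v 0 u L by rewrite vL1 addrC addKr.
apply/addmx_csub/oppmx_csub; first exact: ioh_csub_iohmx.
by rewrite iohE // mulmxA; apply/mulmx_csub/iohmx_Theta_invariant.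
Qed.

Lemma PPgen_csub_iohmx : csubmx PP W.
Proof. exact/krylov_min/Pimx_csub_iohmx/iohmx_Theta_invariant. Qed.

Lemma ioh_csub_PPgen_from x0 u t0 : (L <= t0)%N -> csubmx (v x0 u t0) PP ->
  forall k, csubmx (v x0 u (t0 + k)) PP.
Proof.
move=> Lt0 vPP; elim=> [|k IH]; first by rewrite addn0.
rewrite addnS (ioh_step B Od_obsv) ?(leq_trans Lt0 (leq_addr _ _)) //.
apply: addmx_csub; last exact/mulmx_csub/krylov_base.
exact/(csubmx_trans _ (krylov_invariant _ _))/csubmxMl.
Qed.

Lemma iohmx_tr_free : row_free W^T.
Proof.
pose Z := block_mx 1%:M 0 (- (Od *m toeplitz A B C L)) Od.
have ZW : Z *m W = 1%:M.
  rewrite /Z /iohmx mulmx_block !mul1mx !mul0mx !mulmx0 !addr0 !add0r Od_obsv.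
  by rewrite mulmx1 addNr -scalar_mx_block.
by apply/row_freeP; exists Z^T; rewrite -trmx_mul ZW trmx1.
Qed.

Hypothesis ctrb_full : \rank (ctrb A B n) = n.

Lemma iohmx_csub_PPgen : csubmx W PP.
Proof.
apply: col_csubP => z; rewrite -(vsubmxK z); set U := usubmx z; set x := dsubmx z.
have [w ->] : exists w, x = ctrb A B n *m w.
  by apply/csubmxP/submx_full; rewrite /row_full mxrank_tr ctrb_full.
(* Rest on [0, L), steer the state from 0 to x on [L, L + n), then feed U. *)
pose u k := if (k < L)%N then 0
  else if (k < L + n)%N then bblock w (k - L) else bblock U (k - L - n).
have u_L : bcol (fun k : 'I_L => u (0 + k)%N) = 0.
  by rewrite -(bcol0 _ L m 1); congr bcol; apply/funext => k; rewrite /u add0n ltn_ord.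
have state_L : state A B 0 u L = 0.
  by rewrite -[L]add0n state_add_ctrb u_L !mulmx0 addr0.
have state_Ln : state A B 0 u (L + n) = ctrb A B n *m w.
  rewrite state_add_ctrb state_L mulmx0 add0r -[in RHS](bcol_bblock w); congr (_ *m bcol _).
  by apply/funext => k; rewrite /u ltnNge leq_addr /= ltn_add2l ltn_ord addKn.
have u_U : bcol (fun k : 'I_L => u (L + n + L - L + k)%N) = U.
  rewrite -[RHS](bcol_bblock U); congr bcol; apply/funext => k.
  by rewrite /u ifF ?ifF; [congr bblock | | ]; lia.
have vL_PP : csubmx (v 0 u L) PP.
  by rewrite iohE // subnn u_L /= col_mx0 mulmx0 /csubmx trmx0 sub0mx.
have := ioh_csub_PPgen_from (leqnn L) vL_PP (n + L).
by rewrite addnA iohE ?leq_addl // u_U (_ : L + n + L - L = L + n)%N ?state_Ln //; lia.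
Qed.

Lemma ioh_csub_PPgen x0 u t : (L <= t)%N -> csubmx (v x0 u t) PP.
Proof. by move=> Lt; apply: csubmx_trans (ioh_csub_iohmx x0 u Lt) iohmx_csub_PPgen. Qed.

Lemma ioh_reduced p (P : 'M[R]_(L * m + L * r, p)) x0 u (vh : nat -> 'cV[R]_p) :
  P^T *m P = 1%:M -> csubmx PP P -> vh L = P^T *m v x0 u L ->
  (forall t, (L <= t)%N -> vh t.+1 = P^T *m Th *m P *m vh t + P^T *m Pi *m u t) ->
  forall t, (L <= t)%N -> v x0 u t = P *m vh t.
Proof.
move=> PtP PPP vhL vh_step t /subnKC <-; set k := (t - L)%N; clearbody k.
have vP s : (L <= s)%N -> P *m (P^T *m v x0 u s) = v x0 u s.
  by move=> Ls; apply/csubmx_projK/(csubmx_trans (ioh_csub_PPgen _ _ Ls)).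
elim: k => [|k IH]; first by rewrite addn0 vhL vP.
rewrite addnS vh_step ?leq_addr // -!mulmxA -mulmxDr -IH mulmxA.
by rewrite -(ioh_step B Od_obsv) ?leq_addr // -mulmxA vP // ltnW // ltnS leq_addr.
Qed.

End IohImage.

Lemma mulmx_tr_gt0 (R : realDomainType) N (w : 'rV[R]_N) : w != 0 -> 0 < (w *m w^T) 0 0.
Proof.
move=> w0; rewrite mxE lt_def sumr_ge0 => [|j _]; last by rewrite mxE -expr2 sqr_ge0.
rewrite andbT; apply: contra w0 => /eqP/psumr_eq0P w2_0; apply/eqP/rowP => j.
have /eqP : w 0 j * w^T j 0 = 0 by apply: w2_0 => // i _; rewrite mxE -expr2 sqr_ge0.
by rewrite mxE -expr2 sqrf_eq0 mxE => /eqP.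
Qed.

Section GramSchmidt.
Variable R : rcfType.

Lemma orthonormal_col_mx k N (y : 'rV[R]_N) (Y : 'M[R]_(k, N)) :
  y *m y^T = 1%:M -> y *m Y^T = 0 -> Y *m Y^T = 1%:M ->
  col_mx y Y *m (col_mx y Y)^T = 1%:M.
Proof.
move=> yy yY YY; rewrite tr_col_mx mul_col_row yy yY YY.
by rewrite -[Y *m y^T]trmxK trmx_mul trmxK yY trmx0 -scalar_mx_block.
Qed.

(* One Gram-Schmidt step: [x] minus its projection onto the rows of [Y], normalised. *)
Lemma orthonormal_extend k N (x : 'rV[R]_N) (Y : 'M[R]_(k, N)) :
  Y *m Y^T = 1%:M -> ~~ (x <= Y)%MS ->
  exists y : 'rV[R]_N, [/\ y *m y^T = 1%:M, y *m Y^T = 0 & (col_mx y Y == col_mx x Y)%MS].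
Proof.
move=> YY xY; pose w := x - x *m Y^T *m Y.
have wY : w *m Y^T = 0 by rewrite /w mulmxBl -!mulmxA YY mulmx1 subrr.
have w0 : w != 0.
  apply: contra xY => /eqP /subr0_eq ->; exact: submxMl.
have ww := mulmx_tr_gt0 w0; set s := Num.sqrt ((w *m w^T) 0 0).
have s_gt0 : 0 < s by rewrite sqrtr_gt0.
exists (s^-1 *: w); split.
- rewrite linearZ /= -scalemxAl -scalemxAr scalerA; apply/matrixP => i j.
  rewrite !ord1 mxE [w *m w^T]mx11_scalar mxE -[_ 0 0]sqr_sqrtr ?ltW // -/s.
  by rewrite mxE /= mulr1n -expr2 exprVn mulVf // sqrf_eq0 gt_eqF.
- by rewrite -scalemxAl wY scaler0.
rewrite -!addsmxE; apply/andP; split; rewrite addsmx_sub addsmxSr andbT.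
  apply/scalemx_sub/addmx_sub; first exact: addsmxSl.
  by rewrite eqmx_opp; apply/(submx_trans _ (addsmxSr _ _))/submxMl.
have -> : x = s *: (s^-1 *: w) + x *m Y^T *m Y.
  by rewrite scalerA mulfV ?gt_eqF // scale1r subrK.
apply/addmx_sub; first exact/scalemx_sub/addsmxSl.
exact/(submx_trans _ (addsmxSr _ _))/submxMl.
Qed.

Lemma row_free_orthonormal k N (X : 'M[R]_(k, N)) :
  row_free X -> exists Y : 'M[R]_(k, N), Y *m Y^T = 1%:M /\ (Y == X)%MS.
Proof.
elim: k X => [|k IH] X freeX.
  by exists X; split; [apply/matrixP => -[] | exact/eqmxP].
rewrite -[X](vsubmxK (X : 'M[R]_(1 + k, N))) in freeX *.
set x := usubmx _; set X1 := dsubmx _.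
have rk_sum : \rank (x + X1)%MS = k.+1 by rewrite addsmxE; apply/eqP.
have [le_sum _] := mxrank_adds_leqif x X1.
have rk_x : (\rank x <= 1)%N := rank_leq_row x.
have freeX1 : row_free X1.
  by rewrite /row_free eqn_leq rank_leq_row /=; move: le_sum; rewrite rk_sum; lia.
have [Y1 [Y1Y1 eqY1]] := IH X1 freeX1.
have xY1 : ~~ (x <= Y1)%MS.
  apply/negP; rewrite (eqmxP eqY1) => /addsmx_idPr rk_X1.
  by move: (rank_leq_row X1); rewrite -rk_X1 rk_sum ltnn.
have [y [yy yY1 eq_y]] := orthonormal_extend Y1Y1 xY1.
exists (col_mx y Y1 : 'M[R]_(1 + k, N)); split; first exact: orthonormal_col_mx.
apply/eqmxP; apply: eqmx_trans (eqmxP eq_y) _.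
apply: eqmx_trans (eqmx_sym (addsmxE x Y1)) (eqmx_trans _ (addsmxE x X1)).
exact: adds_eqmx (eqmx_refl x) (eqmxP eqY1).
Qed.

End GramSchmidt.

Lemma quad_ge0_eq0 (R : realFieldType) (a b : R) :
  0 <= b -> (forall t, 0 <= 2 * t * a + t ^+ 2 * b) -> a = 0.
Proof.
move=> b_ge0 quad_ge0; pose s := (b + 1)^-1.
have s_gt0 : 0 < s by rewrite invr_gt0; lra.
have sb : s * (b + 1) = 1 by rewrite mulVf //; apply/eqP => b1; lra.
have q := quad_ge0 (- a * s).
have : a ^+ 2 * (s * (1 + s)) <= 0 by nra.
rewrite pmulr_lle0 => [a2_le0|]; last by rewrite mulr_gt0 // addr_gt0.
by apply/eqP; rewrite -sqrf_eq0 eq_le a2_le0 sqr_ge0.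
Qed.

Section PositiveDefinite.
Variable R : realFieldType.

Lemma psd_quad_eq0 N (Phi : 'M[R]_N) (z : 'cV[R]_N) :
  psd Phi -> (z^T *m Phi *m z) 0 0 = 0 -> Phi *m z = 0.
Proof.
move=> [Phi_sym Phi_ge0] zPz.
have wPz (w : 'cV[R]_N) : (w^T *m Phi *m z) 0 0 = 0.
  apply: (quad_ge0_eq0 (Phi_ge0 w)) => t.
  have zPw : (z^T *m Phi *m w) 0 0 = (w^T *m Phi *m z) 0 0.
    rewrite (_ : _ 0 0 = (z^T *m Phi *m w)^T 0 0); last by rewrite [RHS]mxE.
    by rewrite !trmx_mul trmxK Phi_sym mulmxA.
  have tr_zw : (z + t *: w)^T = z^T + t *: w^T by rewrite linearD linearZ.
  have := Phi_ge0 (z + t *: w); rewrite tr_zw !mulmxDl !mulmxDr.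
  rewrite -!scalemxAl -!scalemxAr; move: zPz zPw.
  move: (z^T *m Phi *m z) (z^T *m Phi *m w) (w^T *m Phi *m z) (w^T *m Phi *m w).
  by move=> zz zw wz ww zz0 zw_wz; rewrite !mxE zz0 zw_wz; lra.
apply/eqP/negP => /negP Phiz0.
have : (Phi *m z)^T != 0 by rewrite -trmx0 (inj_eq trmx_inj).
by move/mulmx_tr_gt0; rewrite trmxK mulmxA wPz ltxx.
Qed.

Lemma posdef_compress p N (Phi : 'M[R]_N) (P : 'M[R]_(N, p)) :
  psd Phi -> csubmx P Phi -> P^T *m P = 1%:M -> posdef (P^T *m Phi *m P).
Proof.
move=> Phi_psd PPhi PtP; have [Phi_sym Phi_ge0] := Phi_psd; split.
  by rewrite !trmx_mul trmxK Phi_sym mulmxA.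
move=> x x0; set z := P *m x.
have z0 : z != 0 by apply: contra x0 => /eqP z0; rewrite -[x]mul1mx -PtP -mulmxA -/z z0 mulmx0.
rewrite (_ : x^T *m _ *m x = z^T *m Phi *m z); last by rewrite trmx_mul !mulmxA.
rewrite lt_def Phi_ge0 andbT; apply: contra z0 => /eqP /(psd_quad_eq0 Phi_psd) Phiz.
have [y zPhiy] := csubmxP (mulmx_csub x PPhi).
have zz : z^T *m z = 0.
  by rewrite {2}/z zPhiy mulmxA -Phi_sym -trmx_mul Phiz trmx0 mul0mx.
apply: contraT => nz; have : z^T != 0 by rewrite -trmx0 (inj_eq trmx_inj).
by move/mulmx_tr_gt0; rewrite trmxK zz mxE ltxx.
Qed.

End PositiveDefinite.

Section GaussianMoments.
Context d (T : measurableType d) (R : realType) (mu : probability T R).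

Lemma expectation_lincomb (I : finType) (c : I -> R) (F : I -> T -> R) :
  (forall i, mu.-integrable setT (EFin \o F i)) ->
  ('E_mu[fun w => (\sum_i c i * F i w)%R] = \sum_i (c i)%:E * 'E_mu[F i])%E.
Proof.
move=> intF; rewrite unlock; under eq_integral do rewrite -sumEFin.
rewrite integral_sum // => [|i]; last first.
  by rewrite (_ : (fun x => _) = (fun x => (c i)%:E * (F i x)%:E)%E);
    [exact: integrableZl (intF i) | apply/funext => x; rewrite EFinM].
apply: eq_bigr => i _; under eq_integral => x _ do rewrite EFinM.
by rewrite integralZl //; apply: intF.
Qed.

Lemma gaussian_vec_mulmx N M (X : T -> 'cV[R]_N) (Q : 'M[R]_(M, N)) :
  gaussian_vec mu X -> gaussian_vec mu (fun w => Q *m X w).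
Proof.
move=> gX a; have [mn [s2 [s2_ge0 gQa]]] := gX (Q^T *m a); exists mn, s2; split => //.
by under eq_fun do rewrite mulmxA -[a^T *m Q]trmxK trmx_mul trmxK.
Qed.

Lemma gaussian_vec_measurable N (X : T -> 'cV[R]_N) k :
  gaussian_vec mu X -> measurable_fun setT (fun w => X w k 0).
Proof.
move=> /(_ (delta_mx k 0)) [mn [s2 [_ [mX _]]]].
by move: mX; under eq_fun do rewrite trmx_delta -rowE mxE.
Qed.

Lemma normal_mom2_integrable N (X : T -> 'cV[R]_N) Phi k l :
  normal_mom2 mu X Phi -> mu.-integrable setT (EFin \o (fun w => X w k 0 * X w l 0)).
Proof.
move=> [gX EXX]; have mXX := measurable_funM (gaussian_vec_measurable k gX)
  (gaussian_vec_measurable l gX).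
apply/integrableP; split; first exact/measurable_EFinP.
by rewrite integral_fin_num_abs //; have := EXX k l; rewrite unlock => ->.
Qed.

Lemma normal_mom2_mulmx N M (X : T -> 'cV[R]_N) Phi (Q : 'M[R]_(M, N)) :
  normal_mom2 mu X Phi -> normal_mom2 mu (fun w => Q *m X w) (Q *m Phi *m Q^T).
Proof.
move=> nX; have [gX EXX] := nX; split; first exact: gaussian_vec_mulmx.
move=> i j; transitivity ('E_mu[fun w => (\sum_(kl : 'I_N * 'I_N)
    Q i kl.1 * Q j kl.2 * (X w kl.1 0 * X w kl.2 0))%R])%E.
  congr expectation; apply/funext => w.
  rewrite !mxE -(pair_bigA _ (fun k l => Q i k * Q j l * (X w k 0 * X w l 0))) mulr_suml.
  by apply: eq_bigr => k _; rewrite mulr_sumr; apply: eq_bigr => l _; rewrite mulrACA.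
rewrite expectation_lincomb => [|kl]; last exact: normal_mom2_integrable nX.
under eq_bigr do rewrite EXX -EFinM.
rewrite sumEFin !mxE -(pair_bigA _ (fun k l => Q i k * Q j l * Phi k l)) /=.
rewrite exchange_big; congr (_%:E).
apply: eq_bigr => l _; rewrite !mxE mulr_suml; apply: eq_bigr => k _.
by rewrite mulrAC.
Qed.

End GaussianMoments.

Theorem lemma3 (R : realType) (n m r L : nat)
  (A : 'M[R]_n) (B : 'M[R]_(n, m)) (C : 'M[R]_(r, n)) (Od : 'M[R]_(n, L * r)) :
  \rank (ctrb A B n) = n ->          (* (A,B) controllable *)
  \rank (obsv A C n) = n ->          (* (A,C) observable, so (A,B,C) minimal *)
  schur A ->
  \rank (obsv A C L) = n ->
  is_mp_pinv (obsv A C L) Od ->      (* Od = O_L^dagger *)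
  let Th := Theta A B C Od in
  let Pi := Pimx R m r L in
  let PP := PPgen A B C Od in
  (exists P : 'M[R]_(L * m + L * r, L * m + n),
      same_image P PP /\ P^T *m P = 1%:M) /\
  (forall P : 'M[R]_(L * m + L * r, L * m + n),
      same_image P PP -> P^T *m P = 1%:M ->
      (forall (x0 : 'cV[R]_n) (u : nat -> 'cV[R]_m)
              (vhat : nat -> 'cV[R]_(L * m + n)),
          let v := ioh A B C L x0 u in
          vhat L = P^T *m v L ->
          (forall t, (L <= t)%N ->
             vhat t.+1 = P^T *m Th *m P *m vhat t + P^T *m Pi *m u t) ->
          forall t, (L <= t)%N -> v t = P *m vhat t) /\
      (forall (d : measure_display) (T : measurableType d) (mu : probability T R)
              (vL : T -> 'cV[R]_(L * m + L * r)) (Phi : 'M[R]_(L * m + L * r)),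
          psd Phi -> same_image Phi PP -> normal_mom2 mu vL Phi ->
          normal_mom2 mu (fun w => P^T *m vL w) (P^T *m Phi *m P) /\
          posdef (P^T *m Phi *m P))).
Proof.
move=> ctrb_full _ _ rk_obsv Od_pinv Th Pi PP.
have Od_obsv := mp_pinv_mulVmx rk_obsv Od_pinv.
have W_PP : ((iohmx A B C L)^T == PP^T)%MS.
  by apply/andP; split; [exact: iohmx_csub_PPgen | exact: PPgen_csub_iohmx].
split.
  have [Y [YYt /eqmxP eqY]] := row_free_orthonormal (iohmx_tr_free B Od_obsv).
  exists Y^T; rewrite trmxK; split => //.
  by rewrite /same_image trmxK; apply/eqmxP/(eqmx_trans eqY)/eqmxP.
move=> P /andP [P_PP PP_P] PtP; split.
  by move=> x0 u vh v; apply: (ioh_reduced Od_obsv ctrb_full PtP PP_P).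
move=> d T mu vL Phi Phi_psd /andP [_ PP_Phi] vL_Phi; split.
  by have := normal_mom2_mulmx P^T vL_Phi; rewrite trmxK.
exact: posdef_compress Phi_psd (csubmx_trans P_PP PP_Phi) PtP.
Qed.
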